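(* Let $n,k,r\ge 3$ be integers with $r,k\le 0.01\log n$, and let $\mathcal{H}=\mathcal{H}(n,k,r)$. (i) If $r\le k$, then $\dfrac{n^{2k}}{r^{2k}}\le e(\mathcal{H})\le \dfrac{k\,2^{r+k}}{r!}\,n^{2k}$. (ii) If $r=k+1$, then $\dfrac{n^{2k}}{r^{2k}}\le e(\mathcal{H})\le \dfrac{k\,2^{r+k}}{r!}\,n^{2k}\log n$. (iii) If $k+1<r\le 2k$, then $k\binom{n}{r}n^{k-1}\le e(\mathcal{H})\le \dfrac{k\,2^{r+k+1}}{r!}\,n^{r+k-1}$.
   Context: Logarithms are to base 2. For integers $n,k,r\ge 3$, $\mathcal{H}(n,k,r)$ is the $r$-uniform hypergraph with vertex set $[n]^k=\{1,\dots,n\}^k$ whose edges are all $r$-element subsets of $[n]^k$ whose points lie on a common line in $\mathbb{R}^k$. $e(\cdot)$ denotes the number of edges. *)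

From mathcomp Require Import all_boot.
From Stdlib Require Import Reals ClassicalEpsilon.

Set Implicit Arguments.
Unset Strict Implicit.
Unset Printing Implicit Defensive.

(* Points of [n]^k: functions 'I_k -> 'I_n; the point x has real
   coordinates (x i + 1), so coordinates range over {1,...,n}. *)
Definition point (n k : nat) := {ffun 'I_k -> 'I_n}.

Definition coord (n k : nat) (x : point n k) (i : 'I_k) : R :=
  INR (nat_of_ord (x i) + 1).

Definition on_common_line (n k : nat) (S : {set point n k}) : Prop :=
  exists (p d : 'I_k -> R),
    (exists i : 'I_k, d i <> 0%R) /\
    forall x, x \in S -> exists t : R, forall i : 'I_k,
      coord x i = (p i + t * d i)%R.

Definition on_common_lineb (n k : nat) (S : {set point n k}) : bool :=
  if excluded_middle_informative (on_common_line S) then true else false.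

Definition edges (n k r : nat) : {set {set point n k}} :=
  [set S : {set point n k} | (#|S| == r) && on_common_lineb S].

Definition eH (n k r : nat) : nat := #|edges n k r|.

Definition log2 (x : R) : R := (ln x / ln 2)%R.

(* Let S be an edge.  The lattice differences along its line
   are the integer multiples of a primitive direction v, namely a nonzero
   integer vector of least sup-norm parallel to the line; so, with p the first
   point of S, S = {p} u {p + t v : t in T} for an (r-1)-set T of positive
   integers.  If 2^a <= |v| < 2^(a+1) then every t in T is at most n / 2^a,
   so there are at most n^k (2^(a+2))^k C(n / 2^a, r-1) edges of scale a.
   Bounding (r-1)! C(m, r-1) by m^(r-1), the sum over a is a geometric series
   in 2^(a (k-r+1)): it is dominated by its largest term if r <= k, consists
   of log n comparable terms if r = k+1, and is dominated by its first term
   if r > k+1.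
   Lower bounds.  For r <= k+1 count the arithmetic progressions with first
   term in [n/2]^k and common difference in [n/(2(r-1))]^k; for r > k+1 count
   the r-subsets of the lines parallel to a coordinate axis. *)
Set Warnings "-notation-overridden".
From Stdlib Require Import Lra Lia ZArith ClassicalEpsilon.
From mathcomp Require Import all_boot zify.
From Stdlib Require Import Reals.
(* Importing [Reals] rebinds [^] and the [%N] key of [nat_scope]; restore them. *)
Notation "m ^ n" := (expn m n) : nat_scope.
Delimit Scope nat_scope with N.
Set Implicit Arguments.
Unset Strict Implicit.
Unset Printing Implicit Defensive.

Lemma leq_expn2r m1 m2 e : (m1 <= m2)%N -> (m1 ^ e <= m2 ^ e)%N.
Proof. by move=> le_m; elim: e => // e IH; rewrite !expnS leq_mul. Qed.

Lemma bin_fact_leq_expn m j : ('C(m, j) * j`! <= m ^ j)%N.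
Proof.
rewrite bin_ffact; elim: j m => [|j IH] m; first by rewrite ffactn0.
rewrite ffactnS expnS leq_mul2l (leq_trans (IH _)) ?orbT //.
exact/leq_expn2r/leq_pred.
Qed.

Lemma leq_card_bigcup (I T : finType) (F : I -> {set T}) :
  (#|\bigcup_i F i| <= \sum_i #|F i|)%N.
Proof.
elim/big_rec2: _ => [|i s X _ IH]; first by rewrite cards0.
by apply: leq_trans (leq_card_setU _ _) _; rewrite leq_add2l.
Qed.

Lemma sum_ord_vanishing (f : nat -> nat) t M :
  (forall a, (t < a)%N -> f a = 0%N) -> (\sum_(a < M) f a <= \sum_(a < t.+1) f a)%N.
Proof.
move=> f0; rewrite -!(big_mkord xpredT).
case: (leqP M t.+1) => [le_Mt|lt_tM].
  by rewrite [X in (_ <= X)%N](@big_cat_nat _ _ _ M) ?leq_addr.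
rewrite (@big_cat_nat _ _ _ t.+1) ?(ltnW lt_tM) //=.
rewrite [X in (_ + X <= _)%N]big_nat_cond [X in (_ + X <= _)%N]big1 ?addn0 //.
by move=> a /andP[/andP[lt_ta _] _]; apply: f0.
Qed.

Lemma sum_geom_leq q t : (1 < q)%N -> (\sum_(a < t.+1) q ^ a <= 2 * q ^ t)%N.
Proof.
move=> q_gt1; elim: t => [|t IH]; first by rewrite big_ord_recr big_ord0.
rewrite big_ord_recr /= expnS.
have : (2 * q ^ t <= q * q ^ t)%N by rewrite leq_mul2r q_gt1 orbT.
move: IH; move: (\sum_(a < t.+1) q ^ a) (q ^ t) (q * q ^ t) => S X Y; lia.
Qed.

Lemma sum_halving_leq (y : nat -> nat) Y M :
  (forall a, (y a * 2 ^ a <= Y)%N) -> (\sum_(a < M) y a <= 2 * Y)%N.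
Proof.
move=> yY.
suff : (2 ^ M * \sum_(a < M) y a + 2 * Y <= 2 ^ M.+1 * Y)%N.
  rewrite expnS -mulnA => ?; rewrite -(leq_pmul2l (expn_gt0 2 M)); lia.
elim: M => [|M IH]; first by rewrite big_ord0 muln0 add0n expn1.
rewrite big_ord_recr /= !expnS; have := yY M; move: IH; rewrite expnS.
move: (2 ^ M) (\sum_(i < M) y i) (y M) => X Z0 yM; nia.
Qed.

Section IntegerVectors.
Variable k : nat.
Implicit Types (v w D : 'I_k -> Z).

Definition parallel D v := exists l : R, forall i, IZR (v i) = (l * IZR (D i))%R.
Definition nonzero v := exists i, v i <> 0%Z.
Definition supnorm v := \max_(i < k) Z.abs_nat (v i).

Lemma supnorm_ge v i : (Z.abs_nat (v i) <= supnorm v)%N.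
Proof. exact: leq_bigmax. Qed.

Lemma supnorm_gt0 v : nonzero v -> (0 < supnorm v)%N.
Proof. by move=> [i vi0]; apply: leq_trans (supnorm_ge v i); lia. Qed.

Lemma ex_min_supnorm (P : ('I_k -> Z) -> Prop) w : P w -> nonzero w ->
  exists v, [/\ P v, nonzero v & forall w, P w -> nonzero w -> (supnorm v <= supnorm w)%N].
Proof.
move=> Pw nz_w.
pose attains m := exists v, [/\ P v, nonzero v & supnorm v = m].
pose attained m := if excluded_middle_informative (attains m) then true else false.
have attainedP m : reflect (attains m) (attained m).
  by rewrite /attained; case: excluded_middle_informative => h; constructor.
have ex_att : exists m, attained m by exists (supnorm w); apply/attainedP; exists w.
case: (ex_minnP ex_att) => m /attainedP[v [Pv nz_v <-]] min_m.
by exists v; split=> // u Pu nz_u; apply/min_m/attainedP; exists u.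
Qed.

Lemma parallel_multiple D v w : parallel D v -> nonzero v -> parallel D w ->
  exists mu, forall i, IZR (w i) = (mu * IZR (v i))%R.
Proof.
move=> [l Dv] [i0 vi0] [o Dw].
have l0 : l <> 0%R by move=> l0; apply: vi0; apply: eq_IZR; rewrite Dv l0 Rmult_0_l.
by exists (o / l)%R => i; rewrite Dw Dv; field.
Qed.

Lemma supnorm_scale_lt u v c : (forall i, IZR (u i) = (c * IZR (v i))%R) ->
  (0 <= c < 1)%R -> nonzero u -> (supnorm u < supnorm v)%N.
Proof.
move=> uv c01 [i0 ui0].
have v_gt0 : (0 < supnorm v)%N.
  by apply: supnorm_gt0; exists i0 => vi0; apply: ui0; apply: eq_IZR; rewrite uv vi0; ring.
rewrite -(prednK v_gt0) ltnS; apply/bigmax_leqP => i _.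
have := supnorm_ge v i.
have : (Rabs (IZR (u i)) <= c * Rabs (IZR (v i)))%R.
  by rewrite uv Rabs_mult (Rabs_pos_eq c) //; lra.
case: (Z.eq_dec (v i) 0) => vi0.
  by move=> _ _; have /eq_IZR -> : IZR (u i) = 0%R by rewrite uv vi0 Rmult_0_r.
have : (0 < Rabs (IZR (v i)))%R by apply/Rabs_pos_lt/not_0_IZR.
move=> vi_pos ui_le; have : (Rabs (IZR (u i)) < Rabs (IZR (v i)))%R by nra.
rewrite !Rabs_Zabs => /lt_IZR; lia.
Qed.

Lemma parallel_min_divides D v : parallel D v -> nonzero v ->
  (forall w, parallel D w -> nonzero w -> (supnorm v <= supnorm w)%N) ->
  forall w, parallel D w -> exists q, forall i, w i = (q * v i)%Z.
Proof.
move=> Dv nz_v v_min w Dw.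
have [mu w_mu] := parallel_multiple Dv nz_v Dw.
have [up_gt up_le] := archimed mu.
pose q := (up mu - 1)%Z; pose u i := (w i - q * v i)%Z.
have u_frac i : IZR (u i) = ((mu - IZR q) * IZR (v i))%R.
  by rewrite /u minus_IZR mult_IZR w_mu; ring.
exists q; case: (excluded_middle_informative (nonzero u)) => [nz_u | u0]; last first.
  move=> i; case: (Z.eq_dec (u i) 0) => [|ui0]; first by rewrite /u; lia.
  by case: u0; exists i.
have Du : parallel D u.
  by case: Dv => l Dv; exists ((mu - IZR q) * l)%R => i; rewrite u_frac Dv; ring.
have frac01 : (0 <= mu - IZR q < 1)%R by rewrite /q minus_IZR; lra.
by have := supnorm_scale_lt u_frac frac01 nz_u; have := v_min _ Du nz_u; lia.
Qed.

End IntegerVectors.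

Lemma ex_minZ (T : eqType) (s : seq T) (f : T -> Z) x : x \in s ->
  exists2 y, y \in s & forall z, z \in s -> (f y <= f z)%Z.
Proof.
elim: s x => // a s IH x _.
case: s IH => [|b s] IH.
  by exists a => [|z]; rewrite ?mem_seq1 // => /eqP ->; lia.
have [m ms m_min] := IH b (mem_head _ _).
case: (Z.le_gt_cases (f a) (f m)) => [am | ma].
  exists a => [|z]; first exact: mem_head.
  by rewrite in_cons => /orP[/eqP -> | /m_min]; lia.
exists m => [|z]; first by rewrite in_cons ms orbT.
by rewrite in_cons => /orP[/eqP -> | /m_min]; lia.
Qed.

Section LinesOfPoints.
Variables (N k : nat).
Local Notation pt := (point N k).
Implicit Types (x y : pt) (S : {set pt}).

Lemma on_common_lineP S : reflect (on_common_line S) (on_common_lineb S).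
Proof. by rewrite /on_common_lineb; case: excluded_middle_informative => h; constructor. Qed.

Definition zcoord x i : Z := Z.of_nat (x i).

Lemma coord_zcoord x i : coord x i = (IZR (zcoord x i) + 1)%R.
Proof. by rewrite /coord /zcoord plus_INR INR_IZR_INZ. Qed.

Lemma zcoord_inj x y : (forall i, zcoord x i = zcoord y i) -> x = y.
Proof. by move=> xy; apply/ffunP => i; apply/val_inj/Nat2Z.inj/xy. Qed.

Lemma zcoord_diff_nonzero x y : x != y -> nonzero (fun i => zcoord y i - zcoord x i)%Z.
Proof.
move=> /eqP xy; apply: NNPP => nz; apply: xy; apply: zcoord_inj => i.
by apply: NNPP => ne; apply: nz; exists i; lia.
Qed.

Lemma on_line_parallel S x0 y0 : on_common_line S -> x0 \in S -> y0 \in S -> x0 != y0 ->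
  forall x, x \in S ->
  parallel (fun i => zcoord y0 i - zcoord x0 i)%Z (fun i => zcoord x i - zcoord x0 i)%Z.
Proof.
move=> [p [d [_ Sline]]] Sx0 Sy0 x0y0 x Sx.
have [t0 E0] := Sline _ Sx0; have [t1 E1] := Sline _ Sy0; have [t E] := Sline _ Sx.
have diff (y : pt) ty : (forall i, coord y i = p i + ty * d i)%R -> forall i,
    IZR (zcoord y i - zcoord x0 i) = ((ty - t0) * d i)%R.
  by move=> Ey i; rewrite minus_IZR; have := Ey i; have := E0 i; rewrite !coord_zcoord; lra.
have t10 : (t1 - t0 <> 0)%R.
  move=> t10; have [i []] := zcoord_diff_nonzero x0y0; apply: eq_IZR.
  by rewrite (diff _ _ E1) t10 Rmult_0_l.
by exists ((t - t0) / (t1 - t0))%R => i; rewrite (diff _ _ E) (diff _ _ E1); field.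
Qed.

Lemma on_line_param S : (1 < #|S|)%N -> on_common_line S ->
  exists p0 v (T : pt -> nat), [/\ p0 \in S, nonzero v &
    forall x, x \in S -> forall i, zcoord x i = (zcoord p0 i + Z.of_nat (T x) * v i)%Z].
Proof.
move=> /card_gt1P[x0 [y0 [Sx0 Sy0 x0y0]]] Sline.
pose D i := (zcoord y0 i - zcoord x0 i)%Z.
have DD : parallel D D by exists 1%R => i; ring.
have [v [Dv nz_v v_min]] := ex_min_supnorm DD (zcoord_diff_nonzero x0y0).
have [i1 vi1] := nz_v.
pose Q x := ((zcoord x i1 - zcoord x0 i1) / v i1)%Z.
have QE x : x \in S -> forall i, (zcoord x i - zcoord x0 i = Q x * v i)%Z.
  move=> Sx; have [q qE] := parallel_min_divides Dv nz_v v_min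
    (on_line_parallel Sline Sx0 Sy0 x0y0 Sx).
  by rewrite /Q qE Z.div_mul.
have [p0 Sp0 p0_min] : exists2 p0, p0 \in S & forall x, x \in S -> (Q p0 <= Q x)%Z.
  have [p0] := @ex_minZ _ (enum S) Q x0 ltac:(by rewrite mem_enum).
  by rewrite mem_enum => Sp0 p0_min; exists p0 => // x Sx; apply/p0_min; rewrite mem_enum.
exists p0, v, (fun x => Z.to_nat (Q x - Q p0)); split=> // x Sx i.
rewrite Z2Nat.id; last by have := p0_min x Sx; lia.
by have := QE x Sx i; have := QE p0 Sp0 i; rewrite Z.mul_sub_distr_r; lia.
Qed.

Section Parametrisation.
Variables (S : {set pt}) (p0 : pt) (v : 'I_k -> Z) (T : pt -> nat).
Hypothesis nz_v : nonzero v.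
Hypothesis S_param :
  forall x, x \in S -> forall i, zcoord x i = (zcoord p0 i + Z.of_nat (T x) * v i)%Z.

Lemma param_inj : {in S &, injective T}.
Proof.
move=> x y Sx Sy Txy; have [i vi0] := nz_v.
apply: zcoord_inj => j; rewrite (S_param Sx) (S_param Sy); congr (_ + _)%Z; lia.
Qed.

Lemma param_p0 : p0 \in S -> T p0 = 0%N.
Proof. by move=> Sp0; have [i] := nz_v; have := S_param Sp0 i; nia. Qed.

Lemma param_step_bound x : x \in S -> (T x * supnorm v < N)%N.
Proof.
move=> Sx; have [i0 _] := nz_v; have N_gt0 : (0 < N)%N by case: (x i0); case: N.
case: (posnP (T x)) => [-> // | Tx_gt0].
rewrite -(prednK N_gt0) ltnS mulnC -leq_divRL //; apply/bigmax_leqP => i _.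
rewrite leq_divRL //; have := S_param Sx i; rewrite /zcoord.
have := ltn_ord (x i); have := ltn_ord (p0 i); nia.
Qed.

End Parametrisation.

End LinesOfPoints.

Section Encoding.
Variables (n k : nat).
Local Notation pt := (point n.+1 k).

(* Directions of sup-norm below [2 ^ a.+1] are stored entrywise, shifted by
   [dir_offset a], in ['I_(dir_range a)]. *)
Definition dir_range a := (2 ^ a.+2 - 2).+1.
Definition dir_offset a : Z := (Z.of_nat (2 ^ a.+1) - 1)%Z.
Definition dir_of a (e : {ffun 'I_k -> 'I_(dir_range a)}) l : Z :=
  (Z.of_nat (e l) - dir_offset a)%Z.

Lemma dir_of_onto a v : (supnorm v < 2 ^ a.+1)%N ->
  exists e : {ffun 'I_k -> 'I_(dir_range a)}, forall l, dir_of e l = v l.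
Proof.
move=> v_lt; exists [ffun l => inord (Z.to_nat (v l + dir_offset a))] => l.
have vl_lt : (Z.abs (v l) < Z.of_nat (2 ^ a.+1))%Z.
  by rewrite -Zabs2Nat.id_abs; apply/inj_lt/ltP; apply: leq_ltn_trans (supnorm_ge v l) _.
have exp_a2 : (2 ^ a.+2 = 2 * 2 ^ a.+1)%N by rewrite expnS.
by rewrite /dir_of /dir_offset ffunE inordK; lia.
Qed.

(* A code [(p, e, B)] stands for the points [p] and [p + (b + 1) * dir_of e]
   for [b \in B]. *)
Definition decode a (c : pt * {ffun 'I_k -> 'I_(dir_range a)} * {set 'I_n.+1}) : {set pt} :=
  [set x | (x == c.1.1) || [exists b in c.2, [forall l,
     Z.eqb (zcoord x l) (zcoord c.1.1 l + Z.of_nat b.+1 * dir_of c.1.2 l)]]].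

Definition steps r a := [set B : {set 'I_n.+1} |
  (B \subset [set b : 'I_n.+1 | (b < n %/ 2 ^ a)%N]) && (#|B| == r.-1)].

Definition codes r a : {set pt * {ffun 'I_k -> 'I_(dir_range a)} * {set 'I_n.+1}} :=
  setX (setX setT setT) (steps r a).

Lemma card_codes r a :
  #|codes r a| = (n.+1 ^ k * dir_range a ^ k * 'C(n %/ 2 ^ a, r.-1))%N.
Proof.
have card_low : #|[set b : 'I_n.+1 | (b < n %/ 2 ^ a)%N]| = n %/ 2 ^ a.
  rewrite -sum1dep_card big_ord_narrow ?sum1_card ?card_ord //.
  exact: leq_trans (leq_div n _) (leqnSn n).
by rewrite !cardsX !cardsT !card_ffun !card_ord cards_draws card_low.
Qed.

Lemma edge_code (S : {set pt}) : (1 < #|S|)%N -> on_common_line S ->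
  exists a : 'I_n.+1, exists2 c, c \in codes #|S| a & S = decode c.
Proof.
move=> S_gt1 Sline.
have [p0 [v [T [Sp0 nz_v S_param]]]] := on_line_param S_gt1 Sline.
have T_inj := param_inj nz_v S_param; have Tp0 := param_p0 nz_v S_param Sp0.
pose a := trunc_log 2 (supnorm v).
have /andP[pow_le pow_gt] := trunc_log_bounds (isT : (1 < 2)%N) (supnorm_gt0 nz_v).
have step_le x : x \in S -> (T x * 2 ^ a <= n)%N.
  move=> Sx; rewrite -ltnS; apply: leq_ltn_trans (param_step_bound nz_v S_param Sx).
  exact: leq_mul.
have T_gt0 x : x \in S -> x != p0 -> (0 < T x)%N.
  by move=> Sx; apply: contraNT; rewrite -eqn0Ngt -Tp0 => /eqP/T_inj ->.
have /card_gt0P[x1] : (0 < #|S :\ p0|)%N by move: S_gt1; rewrite (cardsD1 p0) Sp0.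
rewrite !inE => /andP[x1p0 Sx1].
have a_lt : (a < n.+1)%N.
  apply: ltn_trans (ltn_expl a (isT : (1 < 2)%N)) _; rewrite ltnS.
  by apply: leq_trans (step_le _ Sx1); rewrite leq_pmull ?T_gt0.
have [e dir_e] := dir_of_onto pow_gt.
pose f x : 'I_n.+1 := inord (T x).-1.
have f_val x : x \in S -> x != p0 -> (f x).+1 = T x /\ (f x < n %/ 2 ^ a)%N.
  move=> Sx xp0; have Tx := T_gt0 x Sx xp0.
  have Tx_le : (T x <= n %/ 2 ^ a)%N by rewrite leq_divRL ?expn_gt0 ?step_le.
  by have div_le := leq_div n (2 ^ a); rewrite /f inordK; lia.
exists (Ordinal a_lt), (p0, e, f @: (S :\ p0)).
  rewrite !inE /=; apply/andP; split.
    by apply/subsetP => b /imsetP[x]; rewrite !inE => /andP[xp0 Sx] ->; case: (f_val x Sx xp0).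
  rewrite card_in_imset ?(cardsD1 p0 S) ?Sp0 //.
  move=> x y; rewrite !inE => /andP[xp0 Sx] /andP[yp0 Sy] fxy.
  by apply: T_inj => //; have [<- _] := f_val x Sx xp0; have [<- _] := f_val y Sy yp0; rewrite fxy.
apply/setP => x; rewrite inE; apply/idP/idP => [Sx | ].
  case: (eqVneq x p0) => [// | xp0].
  apply/orP; right; apply/existsP; exists (f x).
  rewrite imset_f ?inE ?xp0 //; apply/forallP => l; apply/Z.eqb_eq.
  by have [-> _] := f_val x Sx xp0; rewrite dir_e -S_param.
case/orP => [/eqP -> // | /existsP[_ /andP[/imsetP[y] + -> /forallP x_line]]].
rewrite !inE => /andP[yp0 Sy]; have [fy _] := f_val y Sy yp0.
suff -> : x = y by [].
by apply: zcoord_inj => l; move/Z.eqb_eq: (x_line l) ->; rewrite fy dir_e -S_param.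
Qed.

End Encoding.

Lemma card_edges_leq_codes n k r : (1 < r)%N ->
  (#|edges n.+1 k r| <= \sum_(a < n.+1) #|codes n k r a|)%N.
Proof.
move=> r_gt1; apply: (@leq_trans #|\bigcup_(a : 'I_n.+1) (@decode n k a @: codes n k r a)|).
  apply/subset_leq_card/subsetP => S; rewrite inE => /andP[/eqP S_r S_line].
  have S_gt1 : (1 < #|S|)%N by rewrite S_r.
  have [a [c c_code ->]] := edge_code S_gt1 (elimT (on_common_lineP _) S_line).
  by apply/bigcupP; exists a => //; rewrite imset_f // -S_r.
apply: leq_trans (leq_card_bigcup _) _.
by apply: leq_sum => a _; apply: leq_imset_card.
Qed.

Section CodeSums.
Variables (n k s : nat).

Lemma codes_term_bound a :
  (s`! * #|codes n k s.+1 a| * 2 ^ (a * s) <= 4 ^ k * n.+1 ^ k * n ^ s * 2 ^ (a * k))%N.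
Proof.
rewrite card_codes /=.
have range_le : (dir_range a ^ k <= 4 ^ k * 2 ^ (a * k))%N.
  rewrite mulnC expnM -expnMn; apply: leq_expn2r.
  by rewrite /dir_range !expnS mulnA; have := expn_gt0 2 a; lia.
have bin_le : ('C(n %/ 2 ^ a, s) * s`! * 2 ^ (a * s) <= n ^ s)%N.
  apply: leq_trans (leq_mul (bin_fact_leq_expn _ _) (leqnn _)) _.
  by rewrite mulnC expnM -expnMn; apply/leq_expn2r; rewrite mulnC leq_divM.
move: range_le bin_le; move: (dir_range a ^ k) ('C(n %/ 2 ^ a, s)) => R C range_le bin_le.
have -> : (s`! * (n.+1 ^ k * R * C) * 2 ^ (a * s) =
           n.+1 ^ k * (R * (C * s`! * 2 ^ (a * s))))%N by lia.
have -> : (4 ^ k * n.+1 ^ k * n ^ s * 2 ^ (a * k) =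
           n.+1 ^ k * (4 ^ k * 2 ^ (a * k) * n ^ s))%N by lia.
by rewrite leq_mul2l leq_mul ?orbT.
Qed.

Lemma card_codes_eq0 a : (n < s * 2 ^ a)%N -> #|codes n k s.+1 a| = 0%N.
Proof. by move=> n_lt; rewrite card_codes bin_small ?muln0 // ltn_divLR ?expn_gt0 // mulnC. Qed.

Lemma sum_codes_leq_geom t : (s <= k)%N -> (n < s * 2 ^ t.+1)%N ->
  (s`! * \sum_(a < n.+1) #|codes n k s.+1 a| <=
   4 ^ k * n.+1 ^ k * n ^ s * \sum_(a < t.+1) (2 ^ (k - s)) ^ a)%N.
Proof.
move=> s_le n_lt; rewrite !big_distrr /=.
apply: leq_trans (sum_ord_vanishing (f := fun a => s`! * #|codes n k s.+1 a|)%N t _ _) _.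
  move=> a lt_ta; rewrite card_codes_eq0 ?muln0 //.
  by apply: leq_trans n_lt _; rewrite leq_mul2l leq_exp2l ?lt_ta ?orbT.
apply: leq_sum => a _; rewrite -(leq_pmul2r (_ : 0 < 2 ^ (a * s))%N) ?expn_gt0 //.
apply: leq_trans (codes_term_bound a) _.
by rewrite -!mulnA -expnM -expnD [((k - s) * a)%N]mulnC -mulnDr subnK.
Qed.

End CodeSums.

Lemma small_r_const_leq s k : (2 <= s)%N -> (s < k)%N ->
  (s.+1 * 2 * 4 ^ k <= k * 2 ^ (s.+1 + k) * s ^ (k - s))%N.
Proof.
move=> s_ge2 s_lt.
have pow_eq : (2 * 4 ^ k = 2 ^ (s.+1 + k) * 2 ^ (k - s))%N.
  by rewrite -expnD (_ : s.+1 + k + (k - s) = (2 * k).+1)%N ?expnS ?expnM //; lia.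
by rewrite -mulnA pow_eq mulnA leq_mul ?leq_expn2r // leq_mul2r s_lt orbT.
Qed.

Lemma card_edges_small_r_scaled n k s : (2 <= s)%N -> (s < k)%N -> (s <= n)%N ->
  (s ^ (k - s) * (s`! * #|edges n.+1 k s.+1|) <= 2 * 4 ^ k * n.+1 ^ (2 * k))%N.
Proof.
move=> s_ge2 s_lt s_le; set e := (k - s)%N; set t := trunc_log 2 (n %/ s).
have s_gt0 : (0 < s)%N by apply: leq_trans s_ge2.
have /andP[t_le t_gt] : (2 ^ t <= n %/ s < 2 ^ t.+1)%N.
  by apply: trunc_log_bounds; rewrite ?divn_gt0.
have n_lt : (n < s * 2 ^ t.+1)%N by rewrite mulnC -ltn_divLR.
have geom : (\sum_(a < t.+1) (2 ^ e) ^ a <= 2 * (2 ^ e) ^ t)%N.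
  by apply: sum_geom_leq; apply: leq_trans (ltn_expl e (isT : (1 < 2)%N)); rewrite /e; lia.
have card_le : (s`! * #|edges n.+1 k s.+1| <= 4 ^ k * n.+1 ^ k * n ^ s * (2 * (2 ^ e) ^ t))%N.
  apply: (@leq_trans (s`! * \sum_(a < n.+1) #|codes n k s.+1 a|)).
    by rewrite leq_mul2l card_edges_leq_codes ?orbT.
  apply: leq_trans (sum_codes_leq_geom (ltnW s_lt) n_lt) _.
  by rewrite leq_mul2l geom orbT.
have st_pow : (s ^ e * (2 ^ e) ^ t <= n ^ e)%N.
  by rewrite expnAC -expnMn leq_expn2r // mulnC -leq_divRL.
have pow_le : (n ^ s * n ^ e <= n.+1 ^ k)%N by rewrite -expnD subnKC ?(ltnW s_lt) ?leq_expn2r.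
apply: leq_trans (leq_mul (leqnn _) card_le) _.
rewrite (_ : n.+1 ^ (2 * k) = n.+1 ^ k * n.+1 ^ k)%N; last by rewrite -expnD addnn -mul2n.
move: st_pow pow_le; move: (s ^ e) ((2 ^ e) ^ t) (n ^ s) (n ^ e) (n.+1 ^ k) (4 ^ k).
move=> A B C D P F AB CD.
have -> : (A * (F * P * C * (2 * B)) = 2 * F * P * (C * (A * B)))%N by lia.
rewrite [X in (_ <= X)%N]mulnA; apply: leq_mul => //.
exact: leq_trans (leq_mul (leqnn C) AB) CD.
Qed.

Lemma card_edges_small_r n k s : (2 <= s)%N -> (s < k)%N -> (s <= n)%N ->
  (s.+1`! * #|edges n.+1 k s.+1| <= k * 2 ^ (s.+1 + k) * n.+1 ^ (2 * k))%N.
Proof.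
move=> s_ge2 s_lt s_le; have scaled := card_edges_small_r_scaled s_ge2 s_lt s_le.
rewrite -(leq_pmul2l (_ : 0 < s ^ (k - s))%N) ?expn_gt0 ?(leq_trans _ s_ge2) //.
apply: (@leq_trans (s.+1 * (2 * 4 ^ k * n.+1 ^ (2 * k))))%N.
  rewrite factS -mulnA mulnCA leq_mul2l; apply/orP; right.
  by apply: leq_trans scaled; rewrite mulnA.
have := small_r_const_leq s_ge2 s_lt.
move: (s ^ (k - s)) (4 ^ k) (2 ^ (s.+1 + k)) (n.+1 ^ (2 * k)) => A F B P le_AF.
have -> : (A * (k * B * P) = k * B * A * P)%N by lia.
have -> : (s.+1 * (2 * F * P) = s.+1 * 2 * F * P)%N by lia.
by rewrite leq_mul2r le_AF orbT.
Qed.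

Lemma card_edges_r_eq_succ_k n k : (0 < k)%N ->
  (k`! * #|edges n.+1 k k.+1| <= (trunc_log 2 n).+1 * (4 ^ k * n.+1 ^ (2 * k)))%N.
Proof.
move=> k_gt0; set t := trunc_log 2 n.
have n_lt : (n < k * 2 ^ t.+1)%N.
  by apply: leq_trans (trunc_log_ltn n (isT : (1 < 2)%N)) _; rewrite leq_pmull.
apply: (@leq_trans (k`! * \sum_(a < n.+1) #|codes n k k.+1 a|)).
  by rewrite leq_mul2l card_edges_leq_codes ?orbT.
apply: leq_trans (sum_codes_leq_geom (leqnn k) n_lt) _.
rewrite subnn expn0 (eq_bigr (fun=> 1%N)) => [|a _]; last by rewrite exp1n.
rewrite sum1_card card_ord mulnC -mulnA leq_mul2l; apply/orP; right.
by rewrite (_ : 2 * k = k + k)%N ?expnD -?mulnA ?leq_mul2l ?leq_expn2r ?orbT //; lia.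
Qed.

Lemma large_r_const_leq s k : (0 < k)%N -> (k < s)%N ->
  (s.+1 * 4 ^ k <= k * 2 ^ (s.+1 + k))%N.
Proof.
move=> k_gt0 k_lt; set d := (s.+1 - k)%N.
have d_lt := ltn_expl d (isT : (1 < 2)%N).
have -> : (2 ^ (s.+1 + k) = 2 ^ d * 4 ^ k)%N.
  by rewrite (_ : 4 = 2 ^ 2)%N // -expnM -expnD; congr (2 ^ _); rewrite /d; lia.
rewrite mulnA leq_mul2r; apply/orP; right.
by apply: leq_trans (_ : k * d.+1 <= _)%N; [rewrite /d; nia | rewrite leq_mul2l d_lt orbT].
Qed.

Lemma sum_codes_leq_halving n k s : (k < s)%N ->
  (s`! * \sum_(a < n.+1) #|codes n k s.+1 a| <= 2 * (4 ^ k * n.+1 ^ (k + s)))%N.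
Proof.
move=> k_lt; rewrite big_distrr /=.
apply: (@sum_halving_leq (fun a => s`! * #|codes n k s.+1 a|)%N) => a.
rewrite -(leq_pmul2r (_ : 0 < 2 ^ (a * k))%N) ?expn_gt0 //.
have pow_le : (2 ^ a * 2 ^ (a * k) <= 2 ^ (a * s))%N.
  rewrite -expnD leq_exp2l // -[X in (X + _)%N](muln1 a) -mulnDr leq_mul2l.
  by rewrite add1n k_lt orbT.
apply: (@leq_trans (s`! * #|codes n k s.+1 a| * 2 ^ (a * s))).
  by rewrite -mulnA leq_mul2l pow_le orbT.
apply: leq_trans (codes_term_bound n k s a) _.
by rewrite expnD mulnA leq_mul2r leq_mul2l leq_expn2r ?orbT.
Qed.

Lemma card_edges_large_r n k s : (0 < k)%N -> (k < s)%N ->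
  (s.+1`! * #|edges n.+1 k s.+1| <= k * 2 ^ (s.+1 + k + 1) * n.+1 ^ (s.+1 + k - 1))%N.
Proof.
move=> k_gt0 k_lt.
apply: (@leq_trans (s.+1 * (s`! * \sum_(a < n.+1) #|codes n k s.+1 a|))).
  by rewrite factS -mulnA !leq_mul2l card_edges_leq_codes ?orbT //; lia.
apply: leq_trans (leq_mul (leqnn _) (sum_codes_leq_halving n k_lt)) _.
rewrite (_ : s.+1 + k - 1 = k + s)%N; last by lia.
have := large_r_const_leq k_gt0 k_lt; rewrite addn1 expnS.
move: (4 ^ k) (2 ^ (s.+1 + k)) (n.+1 ^ (k + s)) => F B P le_FB.
have -> : (s.+1 * (2 * (F * P)) = 2 * (s.+1 * F) * P)%N by lia.
have -> : (k * (2 * B) * P = 2 * (k * B) * P)%N by lia.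
by rewrite leq_mul2r leq_mul2l le_FB !orbT.
Qed.

Section ArithmeticProgressions.
Variables (n k r h D : nat).
Hypothesis k_gt0 : (0 < k)%N.
Hypothesis r_gt1 : (1 < r)%N.
Hypothesis fits : (h.-1 + r.-1 * D <= n)%N.
Local Notation pt := (point n.+1 k).

Definition progression_pt (x : {ffun 'I_k -> 'I_h}) (dv : {ffun 'I_k -> 'I_D}) i : pt :=
  [ffun l => inord (x l + i * (dv l).+1)].

Definition progression x dv : {set pt} := [set progression_pt x dv i | i : 'I_r].

Lemma progression_ptE x dv (i : 'I_r) l :
  progression_pt x dv i l = (x l + i * (dv l).+1)%N :> nat.
Proof.
have x_lt := ltn_ord (x l); have i_lt := ltn_ord i; have dv_lt := ltn_ord (dv l).
have step_le : (i * (dv l).+1 <= r.-1 * D)%N by apply: leq_mul; lia.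
by rewrite ffunE inordK //; lia.
Qed.

Lemma progression_edge x dv : progression x dv \in edges n.+1 k r.
Proof.
rewrite inE; apply/andP; split.
  rewrite card_imset ?card_ord // => i j /ffunP /(_ (Ordinal k_gt0)) /(congr1 val).
  by rewrite /= !progression_ptE => /addnI /eqP; rewrite eqn_mul2r /= => /eqP/val_inj.
apply/on_common_lineP.
exists (fun l => INR (x l + 1)), (fun l => INR (dv l).+1); split.
  by exists (Ordinal k_gt0); apply: not_0_INR.
move=> _ /imsetP[i _ ->]; exists (INR i) => l.
by rewrite /coord progression_ptE !plus_INR mult_INR; ring.
Qed.

Lemma progression_inj :
  injective (fun c : {ffun 'I_k -> 'I_h} * {ffun 'I_k -> 'I_D} => progression c.1 c.2).
Proof.
have shift x dv x' dv' (i : 'I_r) : progression x dv = progression x' dv' ->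
    exists j : 'I_r, forall l, (x l + i * (dv l).+1 = x' l + j * (dv' l).+1)%N.
  move=> E; have : progression_pt x dv i \in progression x' dv' by rewrite -E imset_f.
  by case/imsetP => j _ Ej; exists j => l; rewrite -!progression_ptE Ej.
move=> [x dv] [x' dv'] /= E.
have x_eq : x = x'.
  have [j xj] := shift _ _ _ _ (Ordinal (ltnW r_gt1)) E.
  have [j' xj'] := shift _ _ _ _ (Ordinal (ltnW r_gt1)) (esym E).
  by apply/ffunP => l; apply: val_inj; have := xj l; have := xj' l; rewrite /= !mul0n; lia.
subst x'; congr (_, _); apply/ffunP => l; apply: val_inj.
have multiple dv1 dv2 : progression x dv1 = progression x dv2 ->
    exists j, (dv1 l).+1 = j * (dv2 l).+1 :> nat.
  move=> E12; have [j dj] := shift _ _ _ _ (Ordinal r_gt1) E12.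
  by exists j; have := dj l; rewrite /= mul1n => /addnI.
have [[j dj] [j' dj']] := (multiple _ _ E, multiple _ _ (esym E)).
have [j_gt0 j'_gt0] : (0 < j)%N /\ (0 < j')%N by move: dj dj'; case: j; case: j'.
apply/eqP; rewrite eqn_leq; apply/andP; split; rewrite -ltnS.
  by rewrite [X in (_ <= X)%N]dj' leq_pmull.
by rewrite [X in (_ <= X)%N]dj leq_pmull.
Qed.

Lemma card_progressions_leq : (h ^ k * D ^ k <= #|edges n.+1 k r|)%N.
Proof.
have -> : (h ^ k * D ^ k = #|[set: {ffun 'I_k -> 'I_h} * {ffun 'I_k -> 'I_D}]|)%N.
  by rewrite cardsT card_prod !card_ffun !card_ord.
rewrite -(card_imset _ progression_inj); apply/subset_leq_card/subsetP => S.
by case/imsetP => c _ ->; apply: progression_edge.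
Qed.

End ArithmeticProgressions.

Section AxisLines.
Variables (n k r : nat).
Hypothesis r_gt1 : (1 < r)%N.
Local Notation pt := (point n.+1 k).

Definition axis_pt (i : 'I_k) (y : {ffun 'I_k.-1 -> 'I_n.+1}) (a : 'I_n.+1) : pt :=
  [ffun l => if unlift i l is Some j then y j else a].

Lemma axis_pt_at i y a : axis_pt i y a i = a.
Proof. by rewrite ffunE unlift_none. Qed.

Lemma axis_pt_lift i y a j : axis_pt i y a (lift i j) = y j.
Proof. by rewrite ffunE liftK. Qed.

Definition axis_line (c : 'I_k * {ffun 'I_k.-1 -> 'I_n.+1} * {set 'I_n.+1}) : {set pt} :=
  [set axis_pt c.1.1 c.1.2 a | a in c.2].

Definition axis_codes :=
  [set c : 'I_k * {ffun 'I_k.-1 -> 'I_n.+1} * {set 'I_n.+1} | #|c.2| == r].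

Lemma card_axis_codes : #|axis_codes| = (k * n.+1 ^ k.-1 * 'C(n.+1, r))%N.
Proof.
have -> : axis_codes = setX (setX setT setT) [set A : {set 'I_n.+1} | #|A| == r].
  by apply/setP => [[[i y] A]]; rewrite !inE.
by rewrite !cardsX !cardsT card_ffun !card_ord card_draws card_ord.
Qed.

Lemma axis_line_edge c : c \in axis_codes -> axis_line c \in edges n.+1 k r.
Proof.
case: c => [[i y] A]; rewrite !inE /= => /eqP A_r; apply/andP; split.
  by rewrite card_imset ?A_r // => a b /ffunP /(_ i); rewrite !axis_pt_at.
apply/on_common_lineP.
exists (fun l => coord (axis_pt i y ord0) l), (fun l => if l == i then 1%R else 0%R); split.
  by exists i; rewrite eqxx; apply: R1_neq_R0.
move=> _ /imsetP[a _ ->]; exists (INR a) => l.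
case: (unliftP i l) => [j -> | ->]; last by rewrite /coord /= !axis_pt_at eqxx !plus_INR /=; ring.
by rewrite /coord /= !axis_pt_lift eq_sym (negbTE (neq_lift i j)) Rmult_0_r Rplus_0_r.
Qed.

Lemma axis_line_inj : {in axis_codes &, injective axis_line}.
Proof.
move=> [[i y] A] [[i' y'] A']; rewrite !inE /= => /eqP A_r /eqP A'_r E.
have mem a : a \in A -> exists2 a', a' \in A' & axis_pt i y a = axis_pt i' y' a'.
  move=> Aa; have : axis_pt i y a \in axis_line (i', y', A') by rewrite -E imset_f.
  by case/imsetP => a' A'a' ->; exists a'.
have /card_gt1P[a [b [Aa Ab ab]]] : (1 < #|A|)%N by rewrite A_r.
have ii' : i = i'.
  apply: contraNeq ab => ii'; case: (unliftP i' i) => [j Ej | Ei]; last by rewrite Ei eqxx in ii'.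
  have [a' _ Ea] := mem a Aa; have [b' _ Eb] := mem b Ab.
  by rewrite -(axis_pt_at i y a) -(axis_pt_at i y b) Ea Eb Ej !axis_pt_lift.
subst i'.
have yy' : y = y'.
  by apply/ffunP => j; have [a' _ Ea] := mem a Aa; rewrite -(axis_pt_lift i y a) Ea axis_pt_lift.
subst y'; congr (_, _).
have sub (B B' : {set 'I_n.+1}) : axis_line (i, y, B) = axis_line (i, y, B') -> B \subset B'.
  move=> EB; apply/subsetP => u Bu.
  have : axis_pt i y u \in axis_line (i, y, B') by rewrite -EB imset_f.
  by case/imsetP => u' B'u' /ffunP/(_ i); rewrite !axis_pt_at => ->.
by apply/eqP; rewrite eqEsubset !sub.
Qed.

Lemma card_axis_lines_leq : (k * n.+1 ^ k.-1 * 'C(n.+1, r) <= #|edges n.+1 k r|)%N.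
Proof.
rewrite -card_axis_codes -(card_in_imset axis_line_inj).
by apply/subset_leq_card/subsetP => S /imsetP[c c_code ->]; apply: axis_line_edge.
Qed.

End AxisLines.

Lemma INR_expn a m : INR (a ^ m) = (INR a ^ m)%R.
Proof. by elim: m => [|m IH] //; rewrite expnS mult_INR IH. Qed.

Lemma INR_expn2 m : INR (2 ^ m) = (2 ^ m)%R.
Proof. by rewrite INR_expn. Qed.

Lemma INR_leq_div x b c : (0 < b)%N -> (b * x <= c)%N -> (INR x <= INR c / INR b)%R.
Proof.
move=> b_gt0 le_bx; have b_pos : (0 < INR b)%R by apply/lt_0_INR/ltP.
apply: (Rmult_le_reg_r (INR b)) => //; rewrite /Rdiv Rmult_assoc Rinv_l ?Rmult_1_r; last lra.
by rewrite -mult_INR; apply/le_INR/leP; rewrite multE mulnC.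
Qed.

Lemma INR_div_leq a b c : (0 < b)%N -> (a <= b * c)%N -> (INR a / INR b <= INR c)%R.
Proof.
move=> b_gt0 le_a; have b_pos : (0 < INR b)%R by apply/lt_0_INR/ltP.
apply: (Rmult_le_reg_r (INR b)) => //; rewrite /Rdiv Rmult_assoc Rinv_l ?Rmult_1_r; last lra.
by rewrite -mult_INR; apply/le_INR/leP; rewrite multE mulnC.
Qed.

Lemma ln2_gt0 : (0 < ln 2)%R.
Proof. by have := ln_lt_2; lra. Qed.

Lemma pow2_leq_of_log2 n m : (0 < n)%N -> (INR m <= 0.01 * log2 (INR n))%R ->
  (2 ^ (100 * m) <= n)%N.
Proof.
move=> n_gt0 m_le; rewrite leqNgt; apply/negP => /ltP/lt_INR n_lt.
have n_pos : (0 < INR n)%R by apply/lt_0_INR/ltP.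
have := ln_increasing _ _ n_pos n_lt; rewrite INR_expn2 ln_pow ?mult_INR; last lra.
have l2 := ln2_gt0; move: m_le; rewrite /log2 (_ : INR 100 = 100%R); last by rewrite /=; lra.
move=> m_le ln_lt; have : (ln (INR n) < 100 * INR m * ln 2)%R by lra.
have : (ln (INR n) / ln 2 * ln 2 = ln (INR n))%R by field; lra.
nra.
Qed.

Lemma INR_leq_log2 t n : (2 ^ t <= n)%N -> (INR t <= log2 (INR n))%R.
Proof.
move=> /leP/le_INR; rewrite INR_expn2 => pow_le.
have pow_pos : (0 < 2 ^ t)%R by apply: pow_lt; lra.
have ln_le : (ln (2 ^ t) <= ln (INR n))%R.
  by case: (Rle_lt_or_eq_dec _ _ pow_le) => [/(ln_increasing _ _ pow_pos) | ->]; lra.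
rewrite ln_pow in ln_le; last lra.
have l2 := ln2_gt0; rewrite /log2.
have : (ln (INR n) / ln 2 * ln 2 = ln (INR n))%R by field; lra.
nra.
Qed.

(* Since (s + 1)^2 > 4 s, there is room for the roundings in N/2 and N/2/s. *)
Lemma progressions_sq_leq s N : (2 <= s)%N -> (64 * (s.+2 * s.+2) <= N)%N ->
  (N * N <= s.+1 * s.+1 * (N./2 * (N./2 %/ s)))%N.
Proof.
move=> s_ge2 N_ge; set h := N./2; set D := h %/ s.
have [N_le N_ge2h] : (N <= 2 * h + 1)%N /\ (2 * h <= N)%N.
  by have := odd_double_half N; rewrite -/h -muln2; case: (odd N) => /=; lia.
have h_ge : (4 * (s * s) + s + 1 <= h)%N by nia.
have sD_ge : (h + 1 <= s * D + s)%N.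
  by have := divn_eq h s; have := ltn_pmod h (ltnW s_ge2); rewrite -/D; lia.
suff : (s * (N * N) <= s * (s.+1 * s.+1 * (h * D)))%N by rewrite leq_pmul2l //; lia.
have e1 : (s * (N * N) <= s * ((2 * h + 1) * (2 * h + 1)))%N by rewrite leq_mul2l leq_mul ?orbT.
have e2 : (s * ((2 * h + 1) * (2 * h + 1)) <= (4 * s + 1) * (h * (h + 1 - s)))%N.
  have : (h + 1 - s + s = h + 1)%N by lia.
  move: (h + 1 - s)%N => u; nia.
have e3 : ((4 * s + 1) * (h * (h + 1 - s)) <= s.+1 * s.+1 * (h * (s * D)))%N.
  by apply: leq_mul; [nia | apply: leq_mul => //; lia].
by apply: leq_trans e1 _; apply: leq_trans e2 _; apply: leq_trans e3 _; lia.
Qed.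

Lemma edges_lower_progressions n k r : (0 < k)%N -> (3 <= r)%N ->
  (64 * (r.+1 * r.+1) <= n.+1)%N ->
  (INR n.+1 ^ (2 * k) / INR r ^ (2 * k) <= INR #|edges n.+1 k r|)%R.
Proof.
case: r => // s k_gt0 s_ge N_ge; set N := n.+1; set h := N./2; set D := h %/ s.
have fits : (h.-1 + s.+1.-1 * D <= n)%N.
  have := odd_double_half N; have : (s * D <= h)%N by rewrite mulnC leq_divM.
  rewrite -/h /=; case: (odd N) => /=; lia.
have sq_le := progressions_sq_leq s_ge N_ge; rewrite -/h -/D in sq_le.
have count : (N ^ (2 * k) <= s.+1 ^ (2 * k) * #|edges N k s.+1|)%N.
  apply: (@leq_trans (s.+1 ^ (2 * k) * (h ^ k * D ^ k))%N).
    by rewrite -expnMn !expnM -!expnMn leq_expn2r.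
  by rewrite leq_mul2l (card_progressions_leq k_gt0 (ltnW s_ge) fits) orbT.
by rewrite -!INR_expn; apply: INR_div_leq; rewrite ?expn_gt0.
Qed.

Lemma INR_fact_gt0 m : (0 < INR m`!)%R.
Proof. by apply/lt_0_INR/ltP; rewrite fact_gt0. Qed.

Lemma edges_upper_small_r n k r : (3 <= r)%N -> (r <= k)%N -> (r <= n)%N ->
  (INR #|edges n.+1 k r| <= INR k * 2 ^ (r + k) / INR r`! * INR n.+1 ^ (2 * k))%R.
Proof.
case: r => // s s_ge s_le s_len.
have := INR_leq_div (fact_gt0 s.+1) (card_edges_small_r s_ge s_le (ltnW s_len)).
have := INR_fact_gt0 s.+1; set F := INR _`!.
rewrite !mult_INR INR_expn2 INR_expn => F_gt0 /Rle_trans; apply.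
by apply: Req_le; field; lra.
Qed.

Lemma edges_upper_r_eq_succ_k n k : (3 <= k)%N -> (0 < n)%N -> (2 <= log2 (INR n.+1))%R ->
  (INR #|edges n.+1 k k.+1| <=
     INR k * 2 ^ (k.+1 + k) / INR k.+1`! * INR n.+1 ^ (2 * k) * log2 (INR n.+1))%R.
Proof.
move=> k_ge n_gt0 log_ge; set L := log2 (INR n.+1) in log_ge *.
have t_le : (INR (trunc_log 2 n) <= L)%R.
  by apply/INR_leq_log2/(leq_trans (trunc_logP (isT : (1 < 2)%N) n_gt0)).
have := INR_leq_div (fact_gt0 k) (card_edges_r_eq_succ_k n (ltnW (ltnW k_ge))).
move=> /Rle_trans; apply.
rewrite -INR_expn2 (_ : 2 ^ (k.+1 + k) = 2 * 4 ^ k)%N; last by rewrite addSn expnS expnD -expnMn.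
rewrite factS [INR (k.+1 * _)]mult_INR; have := INR_fact_gt0 k; set F := INR k`!.
rewrite !mult_INR !INR_expn => F_gt0.
have k_ge3 : (3 <= INR k)%R by have := le_INR 3 k (elimT leP k_ge); rewrite /=; lra.
have P_gt0 : (0 < INR 4 ^ k * INR n.+1 ^ (2 * k) / F)%R.
  by apply: Rdiv_lt_0_compat => //; apply: Rmult_lt_0_compat; apply: pow_lt; apply: lt_0_INR; lia.
set P := (INR 4 ^ k * INR n.+1 ^ (2 * k) / F)%R in P_gt0.
have -> : (INR (trunc_log 2 n).+1 * (INR 4 ^ k * INR n.+1 ^ (2 * k)) / F =
           INR (trunc_log 2 n).+1 * P)%R by rewrite /P; field; lra.
have -> : (INR k * (INR 2 * INR 4 ^ k) / (INR k.+1 * F) * INR n.+1 ^ (2 * k) * L =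
           (2 * INR k * L / INR k.+1) * P)%R.
  have two : INR 2 = 2%R by rewrite /=; lra.
  by rewrite /P two; field; split; [lra | apply: not_0_INR].
apply: Rmult_le_compat_r; first lra.
have k1_pos : (0 < INR k.+1)%R by apply: lt_0_INR; lia.
apply/(Rmult_le_reg_r (INR k.+1)) => //; rewrite /Rdiv Rmult_assoc Rinv_l ?Rmult_1_r; last lra.
have : (0 <= (INR k - 3) * (L - 2))%R by apply: Rmult_le_pos; lra.
have : (INR (trunc_log 2 n) * (INR k + 1) <= L * (INR k + 1))%R.
  by apply: Rmult_le_compat_r => //; lra.
rewrite !S_INR; nra.
Qed.

Lemma edges_upper_large_r n k r : (0 < k)%N -> (k.+1 < r)%N ->
  (INR #|edges n.+1 k r| <=
     INR k * 2 ^ (r + k + 1) / INR r`! * INR n.+1 ^ (r + k - 1))%R.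
Proof.
case: r => // s k_gt0 k_lt.
have := INR_leq_div (fact_gt0 s.+1) (card_edges_large_r n k_gt0 k_lt).
have := INR_fact_gt0 s.+1; set F := INR _`!.
rewrite !mult_INR INR_expn2 INR_expn => F_gt0 /Rle_trans; apply.
by apply: Req_le; field; lra.
Qed.

Lemma edges_lower_axis n k r : (1 < r)%N ->
  (INR k * INR 'C(n.+1, r) * INR n.+1 ^ (k - 1) <= INR #|edges n.+1 k r|)%R.
Proof.
move=> r_gt1; apply: Rle_trans (le_INR _ _ (elimT leP (card_axis_lines_leq n k r_gt1))).
by rewrite !mult_INR INR_expn subn1; apply: Req_le; ring.
Qed.

Lemma sq_leq_pow2 r : (0 < r)%N -> (64 * (r.+1 * r.+1) <= 2 ^ (100 * r))%N.
Proof.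
move=> r_gt0; have r_lt := ltn_expl r (isT : (1 < 2)%N).
apply: (@leq_trans (2 ^ 6 * (2 ^ r * 2 ^ r))); first by rewrite leq_mul2l leq_mul.
by rewrite -!expnD leq_exp2l //; lia.
Qed.

Theorem claim4p1 (n k r : nat) :
  (3 <= n)%N -> (3 <= k)%N -> (3 <= r)%N ->
  (INR r <= 0.01 * log2 (INR n))%R ->
  (INR k <= 0.01 * log2 (INR n))%R ->
  ((r <= k)%N ->
     (INR n ^ (2 * k) / INR r ^ (2 * k) <= INR (eH n k r))%R /\
     (INR (eH n k r) <= INR k * 2 ^ (r + k) / INR (r`!) * INR n ^ (2 * k))%R) /\
  (r = k.+1 ->
     (INR n ^ (2 * k) / INR r ^ (2 * k) <= INR (eH n k r))%R /\
     (INR (eH n k r) <=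
        INR k * 2 ^ (r + k) / INR (r`!) * INR n ^ (2 * k) * log2 (INR n))%R) /\
  ((k.+1 < r)%N -> (r <= 2 * k)%N ->
     (INR k * INR 'C(n, r) * INR n ^ (k - 1) <= INR (eH n k r))%R /\
     (INR (eH n k r) <= INR k * 2 ^ (r + k + 1) / INR (r`!) * INR n ^ (r + k - 1))%R).
Proof.
move=> n_ge k_ge r_ge r_log _.
have log_ge : (2 <= log2 (INR n))%R.
  by have := le_INR 3 r (elimT leP r_ge); rewrite /=; lra.
have n_big := pow2_leq_of_log2 (leq_trans (isT : (0 < 3)%N) n_ge) r_log.
have n_sq := leq_trans (sq_leq_pow2 (ltnW (ltnW r_ge))) n_big.
have r_lt : (r < n)%N.
  apply: leq_trans n_big; apply: leq_trans (ltn_expl r (isT : (1 < 2)%N)) _.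
  by rewrite leq_exp2l //; lia.
case: n log_ge n_sq r_lt {n_ge r_log n_big} => [|n] log_ge n_sq r_lt //.
have k_gt0 : (0 < k)%N by apply: leq_trans k_ge.
rewrite /eH; split; [|split].
- by move=> r_le; split; [exact: edges_lower_progressions | exact: edges_upper_small_r].
- move=> r_eq; split; first exact: edges_lower_progressions.
  by rewrite r_eq; apply: edges_upper_r_eq_succ_k => //; lia.
- by move=> k_lt _; split; [exact: edges_lower_axis (ltnW r_ge) | exact: edges_upper_large_r].
Qed.
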